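(* Let $I\subset\mathbb{R}$ be an interval and let $M,N\colon I^2\to I$ be means. Let $\mathcal{A}_{M,N}$ be the set of all $(x,y)\in I^2$ such that the sequence $\big((M_n,N_n)(x,y)\big)_{n=1}^\infty$ converges to a point of the diagonal $\{(t,t)\colon t\in I\}$. Then $\mathcal{A}_{M,N}$ is a maximal subset of $I^2$ on which all $(M,N)$-invariant means are equal to each other; that is, any two $(M,N)$-invariant means coincide at every point of $\mathcal{A}_{M,N}$, and for every $(x,y)\in I^2\setminus\mathcal{A}_{M,N}$ there exist two $(M,N)$-invariant means taking different values at $(x,y)$.
   Context: A function $K\colon I^2\to\mathbb{R}$ is a mean in $I$ if $\min(x,y)\le K(x,y)\le\max(x,y)$ for all $x,y\in I$. For means $M,N\colon I^2\to I$, $(M_n,N_n):=(M,N)^n$ denotes the $n$-th iterate of the map $(x,y)\mapsto(M(x,y),N(x,y))$. A mean $K\colon I^2\to I$ is $(M,N)$-invariant if $K(M(x,y),N(x,y))=K(x,y)$ for all $x,y\in I$. *)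

From Stdlib Require Import Reals.
Open Scope R_scope.

Definition is_interval (I : R -> Prop) : Prop :=
  forall a b c, I a -> I c -> a <= b -> b <= c -> I b.

Definition is_mean (I : R -> Prop) (K : R -> R -> R) : Prop :=
  forall x y, I x -> I y ->
    I (K x y) /\ Rmin x y <= K x y /\ K x y <= Rmax x y.

Fixpoint MN_iter (M N : R -> R -> R) (n : nat) (x y : R) : R * R :=
  match n with
  | O => (x, y)
  | S k => let p := MN_iter M N k x y in (M (fst p) (snd p), N (fst p) (snd p))
  end.

Definition invariant_mean (I : R -> Prop) (M N K : R -> R -> R) : Prop :=
  is_mean I K /\
  forall x y, I x -> I y -> K (M x y) (N x y) = K x y.

Definition A_MN (I : R -> Prop) (M N : R -> R -> R) (x y : R) : Prop :=
  I x /\ I y /\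
  exists t, I t /\
    Un_cv (fun n => fst (MN_iter M N (S n) x y)) t /\
    Un_cv (fun n => snd (MN_iter M N (S n) x y)) t.

From Stdlib Require Import Reals Lra.
From Coquelicot Require Import Coquelicot.
Open Scope R_scope.

(* For (x, y) in I^2 the intervals [min, max] spanned by the iterates
   (M_n, N_n)(x, y) are nested, so their endpoints converge to limits L(x, y)
   <= H(x, y).  Both L and H are (M,N)-invariant means, and every invariant
   mean K is squeezed between them because K(x, y) = K((M_n, N_n)(x, y)).
   Since H - L is the limit of |M_n - N_n|, the equality L(x, y) = H(x, y)
   holds exactly on A_{M,N}: there all invariant means agree, and off it L and
   H are two invariant means that differ. *)

Lemma MN_iter_shift (M N : R -> R -> R) (x y : R) (n : nat) :
  MN_iter M N n (M x y) (N x y) = MN_iter M N (S n) x y.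
Proof. induction n as [|n IH]; simpl; [reflexivity | now rewrite IH]. Qed.

Lemma Rmax_minus_Rmin (a b : R) : Rmax a b - Rmin a b = Rabs (a - b).
Proof.
  unfold Rmax, Rmin, Rabs.
  destruct (Rle_dec a b), (Rcase_abs (a - b)); lra.
Qed.

Lemma interval_between (I : R -> Prop) (x y z : R) :
  is_interval I -> I x -> I y -> Rmin x y <= z <= Rmax x y -> I z.
Proof.
  intros HI Hx Hy Hz; destruct (Rle_dec x y).
  - rewrite Rmin_left, Rmax_right in Hz by lra; apply (HI x z y); tauto.
  - rewrite Rmin_right, Rmax_left in Hz by lra; apply (HI y z x); tauto.
Qed.

Lemma is_mean_of_bounds (I : R -> Prop) (K : R -> R -> R) :
  is_interval I ->
  (forall x y, I x -> I y -> Rmin x y <= K x y <= Rmax x y) -> is_mean I K.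
Proof.
  intros HI HK x y Hx Hy; pose proof (HK x y Hx Hy).
  split; [apply (interval_between I x y) |]; tauto.
Qed.

Section Iterates.

Variables (M N : R -> R -> R).

Definition iter_min (x y : R) (n : nat) : R :=
  Rmin (fst (MN_iter M N n x y)) (snd (MN_iter M N n x y)).

Definition iter_max (x y : R) (n : nat) : R :=
  Rmax (fst (MN_iter M N n x y)) (snd (MN_iter M N n x y)).

Definition lim_iter_min (x y : R) : R := real (Lim_seq (iter_min x y)).

Definition lim_iter_max (x y : R) : R := real (Lim_seq (iter_max x y)).

Lemma iter_max_minus_iter_min (x y : R) (n : nat) :
  iter_max x y n - iter_min x y n
  = Rabs (fst (MN_iter M N n x y) - snd (MN_iter M N n x y)).
Proof. apply Rmax_minus_Rmin. Qed.

Lemma lim_iter_min_shift (x y : R) :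
  lim_iter_min (M x y) (N x y) = lim_iter_min x y.
Proof.
  unfold lim_iter_min; rewrite <- (Lim_seq_incr_1 (iter_min x y)).
  f_equal; apply Lim_seq_ext; intro n.
  unfold iter_min; now rewrite MN_iter_shift.
Qed.

Lemma lim_iter_max_shift (x y : R) :
  lim_iter_max (M x y) (N x y) = lim_iter_max x y.
Proof.
  unfold lim_iter_max; rewrite <- (Lim_seq_incr_1 (iter_max x y)).
  f_equal; apply Lim_seq_ext; intro n.
  unfold iter_max; now rewrite MN_iter_shift.
Qed.

Variable I : R -> Prop.
Hypotheses (HI : is_interval I) (HM : is_mean I M) (HN : is_mean I N).

Lemma MN_iter_in (x y : R) (n : nat) : I x -> I y ->
  I (fst (MN_iter M N n x y)) /\ I (snd (MN_iter M N n x y)).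
Proof.
  intros Hx Hy; induction n as [|n [H1 H2]]; simpl; [auto |].
  split; [apply (HM _ _ H1 H2) | apply (HN _ _ H1 H2)].
Qed.

Lemma iter_min_incr (x y : R) (n : nat) : I x -> I y ->
  iter_min x y n <= iter_min x y (S n).
Proof.
  intros Hx Hy; destruct (MN_iter_in x y n Hx Hy) as [H1 H2].
  unfold iter_min; simpl.
  destruct (HM _ _ H1 H2) as (_ & HM1 & _), (HN _ _ H1 H2) as (_ & HN1 & _).
  now apply Rmin_glb.
Qed.

Lemma iter_max_decr (x y : R) (n : nat) : I x -> I y ->
  iter_max x y (S n) <= iter_max x y n.
Proof.
  intros Hx Hy; destruct (MN_iter_in x y n Hx Hy) as [H1 H2].
  unfold iter_max; simpl.
  destruct (HM _ _ H1 H2) as (_ & _ & HM2), (HN _ _ H1 H2) as (_ & _ & HN2).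
  now apply Rmax_lub.
Qed.

Lemma iter_min_le_iter_max (x y : R) (n m : nat) : I x -> I y ->
  iter_min x y n <= iter_max x y m.
Proof.
  intros Hx Hy.
  assert (Hmin : forall k, (n <= k)%nat -> iter_min x y n <= iter_min x y k).
  { induction 1; [lra | pose proof (iter_min_incr x y m0 Hx Hy); lra]. }
  assert (Hmax : forall k, (m <= k)%nat -> iter_max x y k <= iter_max x y m).
  { induction 1; [lra | pose proof (iter_max_decr x y m0 Hx Hy); lra]. }
  pose proof (Hmin _ (Nat.le_max_l n m)); pose proof (Hmax _ (Nat.le_max_r n m)).
  assert (iter_min x y (max n m) <= iter_max x y (max n m)) by apply Rmin_Rmax.
  lra.
Qed.

Lemma is_lim_iter_min (x y : R) : I x -> I y ->
  is_lim_seq (iter_min x y) (lim_iter_min x y).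
Proof.
  intros Hx Hy; apply Lim_seq_correct'.
  apply ex_finite_lim_seq_incr with (iter_max x y 0).
  - intro n; now apply iter_min_incr.
  - intro n; now apply iter_min_le_iter_max.
Qed.

Lemma is_lim_iter_max (x y : R) : I x -> I y ->
  is_lim_seq (iter_max x y) (lim_iter_max x y).
Proof.
  intros Hx Hy; apply Lim_seq_correct'.
  apply ex_finite_lim_seq_decr with (iter_min x y 0).
  - intro n; now apply iter_max_decr.
  - intro n; now apply iter_min_le_iter_max.
Qed.

Lemma lim_iter_min_max_between (x y : R) (n : nat) : I x -> I y ->
  iter_min x y n <= lim_iter_min x y /\ lim_iter_min x y <= lim_iter_max x y
  /\ lim_iter_max x y <= iter_max x y n.
Proof.
  intros Hx Hy.
  pose proof (is_lim_iter_min x y Hx Hy) as Hmin.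
  pose proof (is_lim_iter_max x y Hx Hy) as Hmax.
  repeat split.
  - apply (is_lim_seq_incr_compare _ _ Hmin); intro k; now apply iter_min_incr.
  - apply (is_lim_seq_le _ _ _ _ (fun k => iter_min_le_iter_max x y k k Hx Hy)
             Hmin Hmax).
  - apply (is_lim_seq_decr_compare _ _ Hmax); intro k; now apply iter_max_decr.
Qed.

Lemma invariant_lim_iter_min : invariant_mean I M N lim_iter_min.
Proof.
  split; [| intros x y _ _; apply lim_iter_min_shift].
  apply is_mean_of_bounds; [exact HI |]; intros x y Hx Hy.
  pose proof (lim_iter_min_max_between x y 0 Hx Hy); unfold iter_min, iter_max in *.
  simpl in *; lra.
Qed.

Lemma invariant_lim_iter_max : invariant_mean I M N lim_iter_max.
Proof.
  split; [| intros x y _ _; apply lim_iter_max_shift].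
  apply is_mean_of_bounds; [exact HI |]; intros x y Hx Hy.
  pose proof (lim_iter_min_max_between x y 0 Hx Hy); unfold iter_min, iter_max in *.
  simpl in *; lra.
Qed.

Lemma invariant_mean_iter (K : R -> R -> R) (x y : R) (n : nat) :
  invariant_mean I M N K -> I x -> I y ->
  K (fst (MN_iter M N n x y)) (snd (MN_iter M N n x y)) = K x y.
Proof.
  intros [_ HK] Hx Hy; induction n as [|n IH]; simpl; [reflexivity |].
  destruct (MN_iter_in x y n Hx Hy) as [H1 H2].
  now rewrite HK.
Qed.

Lemma invariant_mean_between (K : R -> R -> R) (x y : R) :
  invariant_mean I M N K -> I x -> I y ->
  lim_iter_min x y <= K x y <= lim_iter_max x y.
Proof.
  intros HK Hx Hy.
  assert (Hn : forall n, iter_min x y n <= K x y <= iter_max x y n).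
  { intro n; rewrite <- (invariant_mean_iter K x y n HK Hx Hy).
    destruct (MN_iter_in x y n Hx Hy) as [H1 H2].
    apply (proj1 HK _ _ H1 H2). }
  split.
  - apply (is_lim_seq_le _ _ _ _ (fun n => proj1 (Hn n))
             (is_lim_iter_min x y Hx Hy) (is_lim_seq_const _)).
  - apply (is_lim_seq_le _ _ _ _ (fun n => proj2 (Hn n))
             (is_lim_seq_const _) (is_lim_iter_max x y Hx Hy)).
Qed.

Lemma lim_iter_eq_of_A_MN (x y : R) :
  A_MN I M N x y -> lim_iter_min x y = lim_iter_max x y.
Proof.
  intros (Hx & Hy & t & _ & Ha & Hb).
  apply is_lim_seq_Reals in Ha, Hb.
  assert (Hgap : is_lim_seq
            (fun n => iter_max x y (S n) - iter_min x y (S n)) 0).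
  { apply (is_lim_seq_ext (fun n => Rabs (fst (MN_iter M N (S n) x y)
                                           - snd (MN_iter M N (S n) x y)))).
    { intro n; now rewrite iter_max_minus_iter_min. }
    pose proof (is_lim_seq_abs _ _ (is_lim_seq_minus' _ _ _ _ Ha Hb)) as Habs.
    simpl in Habs; now rewrite Rminus_diag, Rabs_R0 in Habs. }
  assert (Hlim : is_lim_seq (fun n => iter_max x y (S n) - iter_min x y (S n))
                   (lim_iter_max x y - lim_iter_min x y)).
  { apply is_lim_seq_minus'; apply (is_lim_seq_incr_1 (fun n => _ x y n)).
    - now apply is_lim_iter_max.
    - now apply is_lim_iter_min. }
  apply is_lim_seq_unique in Hgap, Hlim; rewrite Hgap in Hlim.
  injection Hlim; lra.
Qed.

Lemma A_MN_of_lim_iter_eq (x y : R) : I x -> I y ->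
  lim_iter_min x y = lim_iter_max x y -> A_MN I M N x y.
Proof.
  intros Hx Hy Heq; split; [exact Hx | split; [exact Hy |]].
  exists (lim_iter_min x y); split.
  { apply (proj1 invariant_lim_iter_min x y Hx Hy). }
  assert (Hmin := is_lim_iter_min x y Hx Hy).
  assert (Hmax := is_lim_iter_max x y Hx Hy); rewrite <- Heq in Hmax.
  assert (Hsqueeze : forall u : nat -> R,
            (forall n, iter_min x y n <= u n <= iter_max x y n) ->
            Un_cv (fun n => u (S n)) (lim_iter_min x y)).
  { intros u Hu; apply is_lim_seq_Reals, (is_lim_seq_incr_1 u).
    exact (is_lim_seq_le_le _ _ _ _ Hu Hmin Hmax). }
  split.
  - apply (Hsqueeze (fun n => fst (MN_iter M N n x y))).
    intro n; split; [apply Rmin_l | apply Rmax_l].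
  - apply (Hsqueeze (fun n => snd (MN_iter M N n x y))).
    intro n; split; [apply Rmin_r | apply Rmax_r].
Qed.

End Iterates.

Theorem mainTheorem3 (I : R -> Prop) (M N : R -> R -> R)
  (HI : is_interval I) (HM : is_mean I M) (HN : is_mean I N) :
  (forall K1 K2 : R -> R -> R,
     invariant_mean I M N K1 -> invariant_mean I M N K2 ->
     forall x y, A_MN I M N x y -> K1 x y = K2 x y)
  /\
  (forall x y, I x -> I y -> ~ A_MN I M N x y ->
     exists K1 K2 : R -> R -> R,
       invariant_mean I M N K1 /\ invariant_mean I M N K2 /\ K1 x y <> K2 x y).
Proof.
  split.
  - intros K1 K2 HK1 HK2 x y HA.
    pose proof HA as (Hx & Hy & _).
    pose proof (lim_iter_eq_of_A_MN M N I HM HN x y HA).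
    pose proof (invariant_mean_between M N I HM HN K1 x y HK1 Hx Hy).
    pose proof (invariant_mean_between M N I HM HN K2 x y HK2 Hx Hy).
    lra.
  - intros x y Hx Hy HA.
    exists (lim_iter_min M N), (lim_iter_max M N).
    split; [now apply invariant_lim_iter_min |].
    split; [now apply invariant_lim_iter_max |].
    intro Heq; exact (HA (A_MN_of_lim_iter_eq M N I HI HM HN x y Hx Hy Heq)).
Qed.
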